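(* Let $n,m,N$ be positive integers. Let $\mathcal{Q}_f\in\mathbb{R}^{n\times n}$ be symmetric positive definite and $\boldsymbol{b}\in\mathbb{R}^n$, and for each $i=1,\dots,N$ let $t_i>0$, let $\mathcal{R}_i\in\mathbb{R}^{m\times m}$ be symmetric positive definite, let $B_i\in\mathbb{R}^{n\times m}$ and $\boldsymbol{a}_i\in\mathbb{R}^m$. Set $T_0=0$ and $T_i=\sum_{j=1}^i t_j$. Let $P\colon[0,T_N]\to\mathbb{R}^{n\times n}$ and $q\colon[0,T_N]\to\mathbb{R}^n$ be the (continuous, piecewise smooth) solution of the piecewise Riccati ODE system $$\dot P(s) = -P(s)B_i\mathcal{R}_i^{-1}B_i^TP(s),\qquad \dot q(s) = -P(s)B_i\mathcal{R}_i^{-1}\big(B_i^Tq(s)-\boldsymbol{a}_i\big),\qquad s\in[T_{i-1},T_i),\ i=1,\dots,N,$$ with $P(0)=\mathcal{Q}_f$ and $q(0)=\boldsymbol{b}$, whose values at time $T_N$ are $$P(T_N)=\Big(\mathcal{Q}_f^{-1}+\sum_{i=1}^N t_iB_i\mathcal{R}_i^{-1}B_i^T\Big)^{-1},\qquad q(T_N)=P(T_N)\Big(\mathcal{Q}_f^{-1}\boldsymbol{b}+\sum_{i=1}^N t_iB_i\mathcal{R}_i^{-1}\boldsymbol{a}_i\Big).$$ Then the recursive least squares update is a discretization of this Riccati system: writing $P_i=P(T_i)$ and $q_i=q(T_i)$, for every $i=1,\dots,N$, $$P_i = P_{i-1} - t_iP_{i-1}B_i\big(\mathcal{R}_i + t_iB_i^TP_{i-1}B_i\big)^{-1}B_i^TP_{i-1},$$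 $$q_i = q_{i-1} + t_iP_iB_i\mathcal{R}_i^{-1}\boldsymbol{a}_i - t_iP_{i-1}B_i\big(\mathcal{R}_i + t_iB_i^TP_{i-1}B_i\big)^{-1}B_i^Tq_{i-1}.$$
   Context: The Riccati system arises from a regularized least-squares learning problem with $N$ data terms (weights $t_i$); $P(T_N)$ and $q(T_N)$ determine the learned minimizer, and the displayed recursion (obtained via the Woodbury identity) is the recursive least squares update for adding the $i$-th data term. *)

From HB Require Import structures.
From mathcomp Require Import all_boot all_order all_algebra.
From mathcomp Require Import all_classical all_reals all_analysis.
Set Implicit Arguments. Unset Strict Implicit. Unset Printing Implicit Defensive.
Import Order.TTheory GRing.Theory Num.Theory.
Local Open Scope ring_scope.

Definition sym_posdef (R : realType) (n : nat) (A : 'M[R]_n) : Prop :=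
  A^T = A /\ forall x : 'cV[R]_n, x != 0 -> 0 < (x^T *m A *m x) ord0 ord0.

(* T_k = t_1 + ... + t_k  (T_0 = 0); data are indexed 1..N *)
Definition Tsum (R : realType) (t : nat -> R) (k : nat) : R :=
  \sum_(1 <= j < k.+1) t j.

(* closed-form value of P at time T_k (the formula for P(T_N) applied to the
   system consisting of the first k data terms) *)
Definition Pcl (R : realType) (n m : nat) (Qf : 'M[R]_n) (t : nat -> R)
  (Rm : nat -> 'M[R]_m) (B : nat -> 'M[R]_(n, m)) (k : nat) : 'M[R]_n :=
  invmx (invmx Qf + \sum_(1 <= j < k.+1) t j *: (B j *m invmx (Rm j) *m (B j)^T)).

Definition qcl (R : realType) (n m : nat) (Qf : 'M[R]_n) (b : 'cV[R]_n)
  (t : nat -> R) (Rm : nat -> 'M[R]_m) (B : nat -> 'M[R]_(n, m))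
  (a : nat -> 'cV[R]_m) (k : nat) : 'cV[R]_n :=
  Pcl Qf t Rm B k *m
    (invmx Qf *m b + \sum_(1 <= j < k.+1) t j *: (B j *m invmx (Rm j) *m a j)).

(* At the sampling times the solution has the closed form P(T_k) = M_k^-1 with
   M_k = Qf^-1 + sum_(j <= k) t_j B_j R_j^-1 B_j^T, and M_k is obtained from M_(k-1)
   by a rank-m update; the Woodbury identity turns this into the stated update of
   P, and q(T_k) = P(T_k) v_k with v_k = v_(k-1) + t_k B_k R_k^-1 a_k gives the one
   of q.  Positive definiteness of Qf and R_j (and t_j >= 0) makes every inverse
   involved exist. *)

From HB Require Import structures.
From mathcomp Require Import all_boot all_order all_algebra.
From mathcomp Require Import all_classical all_reals all_analysis.
Import Order.TTheory GRing.Theory Num.Theory numFieldNormedType.Exports.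
Local Open Scope ring_scope.
Local Open Scope classical_set_scope.

Set Implicit Arguments.
Unset Strict Implicit.
Unset Printing Implicit Defensive.

Lemma mulmx1_invmx (R : comUnitRingType) n (A X : 'M[R]_n) :
  A *m X = 1%:M -> invmx A = X.
Proof.
move=> AX1; have [uA _] := mulmx1_unit AX1.
by rewrite -[invmx A]mulmx1 -AX1 mulmxA mulVmx // mul1mx.
Qed.

Lemma woodbury_invmx (R : comUnitRingType) n m (M : 'M[R]_n) (Rm : 'M[R]_m)
    (Bm : 'M[R]_(n, m)) (t : R) :
  let X := invmx M in let S := invmx (Rm + t *: (Bm^T *m X *m Bm)) in
  M \in unitmx -> Rm \in unitmx -> Rm + t *: (Bm^T *m X *m Bm) \in unitmx ->
  invmx (M + t *: (Bm *m invmx Rm *m Bm^T)) = X - t *: (X *m Bm *m S *m Bm^T *m X).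
Proof.
move=> X S uM uR uS; apply: mulmx1_invmx.
(* [key] is [Rm^-1 (Rm + t B^T X B) S = Rm^-1]; substituting it for one occurrence
   of [Rm^-1] makes the cross terms of the product cancel. *)
have key : invmx Rm = S + t *: (invmx Rm *m (Bm^T *m X *m Bm) *m S).
  rewrite -{1}[invmx Rm]mulmx1 -(mulmxV uS) mulmxA.
  by rewrite -/S mulmxDr mulVmx // mulmxDl mul1mx -scalemxAr -scalemxAl.
rewrite mulmxDl !mulmxBr mulmxV // -scalemxAr !mulmxA mulmxV // mul1mx.
rewrite {1}key mulmxDr !mulmxDl -!scalemxAl mulmxDl -!scalemxAr -!scalemxAl.
by rewrite !mulmxA scalerDr addrK subrK.
Qed.

Section QuadraticForms.
Variable R : numFieldType.

Definition qform n (A : 'M[R]_n) (x : 'cV[R]_n) : R := (x^T *m A *m x) ord0 ord0.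
Definition posdefmx n (A : 'M[R]_n) := forall x, x != 0 -> 0 < qform A x.
Definition psdmx n (A : 'M[R]_n) := forall x, 0 <= qform A x.

Lemma qformD n (A B : 'M[R]_n) x : qform (A + B) x = qform A x + qform B x.
Proof. by rewrite /qform mulmxDr mulmxDl mxE. Qed.

Lemma qformZ n c (A : 'M[R]_n) x : qform (c *: A) x = c * qform A x.
Proof. by rewrite /qform -scalemxAr -scalemxAl mxE. Qed.

Lemma qform0 n (x : 'cV[R]_n) : qform 0 x = 0.
Proof. by rewrite /qform mulmx0 mul0mx mxE. Qed.

Lemma qform_trmx n (A : 'M[R]_n) x : qform A^T x = qform A x.
Proof.
rewrite /qform; have -> : x^T *m A^T *m x = (x^T *m A *m x)^T.
  by rewrite !trmx_mul trmxK mulmxA.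
by rewrite mxE.
Qed.

Lemma posdefmx_unit n (A : 'M[R]_n) : posdefmx A -> A \in unitmx.
Proof.
move=> pdA; rewrite unitmxE unitfE; apply/negP => /det0P [v v0 vA].
have := pdA v^T; rewrite trmx_eq0 => /(_ v0).
by rewrite /qform trmxK vA mul0mx mxE ltxx.
Qed.

Lemma posdefmx_inv n (A : 'M[R]_n) : posdefmx A -> posdefmx (invmx A).
Proof.
move=> pdA x x0; have uA := posdefmx_unit pdA.
have : x = A *m (invmx A *m x) by rewrite mulmxA mulmxV ?mul1mx.
move: (invmx A *m x) => y xE.
have y0 : y != 0 by apply: contraNneq x0 => y0; rewrite xE y0 mulmx0.
have := pdA _ y0; rewrite -qform_trmx /qform xE trmx_mul.
by rewrite !mulmxA -[_ *m invmx A *m A]mulmxA mulVmx ?mulmx1.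
Qed.

Lemma posdefmx_psd n (A : 'M[R]_n) : posdefmx A -> psdmx A.
Proof.
move=> pdA x; have [->|x0] := eqVneq x 0; last exact/ltW/pdA.
by rewrite /qform mulmx0 mxE.
Qed.

Lemma posdefmxD_psd n (A B : 'M[R]_n) : posdefmx A -> psdmx B -> posdefmx (A + B).
Proof. by move=> pdA psdB x x0; rewrite qformD ltr_wpDr ?pdA. Qed.

Lemma psdmxD n (A B : 'M[R]_n) : psdmx A -> psdmx B -> psdmx (A + B).
Proof. by move=> psdA psdB x; rewrite qformD addr_ge0. Qed.

Lemma psdmxZ n c (A : 'M[R]_n) : 0 <= c -> psdmx A -> psdmx (c *: A).
Proof. by move=> c0 psdA x; rewrite qformZ mulr_ge0. Qed.

Lemma psdmx_conj p r (C : 'M[R]_(p, r)) (A : 'M[R]_r) :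
  psdmx A -> psdmx (C *m A *m C^T).
Proof.
by move=> psdA x; have := psdA (C^T *m x); rewrite /qform trmx_mul trmxK !mulmxA.
Qed.

Lemma psdmx_sum (I : Type) (r : seq I) (P : pred I) n (F : I -> 'M[R]_n) :
  (forall i, P i -> psdmx (F i)) -> psdmx (\sum_(i <- r | P i) F i).
Proof.
move=> psdF; apply: big_ind => //; last exact: psdmxD.
by move=> x; rewrite qform0.
Qed.
End QuadraticForms.

Section ClosedFormRecursion.
Variables (R : realType) (n m N : nat) (Qf : 'M[R]_n) (b : 'cV[R]_n).
Variables (t : nat -> R) (Rm : nat -> 'M[R]_m) (B : nat -> 'M[R]_(n, m)).
Variable a : nat -> 'cV[R]_m.
Hypothesis Qf_posdef : posdefmx Qf.
Hypothesis t_ge0 : forall j, (0 < j <= N)%N -> 0 <= t j.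
Hypothesis Rm_posdef : forall j, (0 < j <= N)%N -> posdefmx (Rm j).

Local Notation P k := (Pcl Qf t Rm B k).
Local Notation q k := (qcl Qf b t Rm B a k).

Lemma invPcl_posdef k : (k <= N)%N ->
  posdefmx (invmx Qf + \sum_(1 <= j < k.+1) t j *: (B j *m invmx (Rm j) *m (B j)^T)).
Proof.
move=> kN; apply: posdefmxD_psd; first exact: posdefmx_inv.
rewrite big_nat_cond; apply: psdmx_sum => j /andP[/andP[j1 jk] _].
have jN : (0 < j <= N)%N by rewrite j1 (leq_trans _ kN).
apply: psdmxZ; first exact: t_ge0.
exact/psdmx_conj/posdefmx_psd/posdefmx_inv/Rm_posdef.
Qed.

Lemma PclS k : (k < N)%N ->
  P k.+1 = P k - t k.+1 *: (P k *m B k.+1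
    *m invmx (Rm k.+1 + t k.+1 *: ((B k.+1)^T *m P k *m B k.+1))
    *m (B k.+1)^T *m P k).
Proof.
move=> kN; have pdM := invPcl_posdef (ltnW kN).
have pdR : posdefmx (Rm k.+1) by apply: Rm_posdef; rewrite ltn0Sn.
rewrite /Pcl big_nat_recr //= addrA; apply: woodbury_invmx.
- exact: posdefmx_unit.
- exact: posdefmx_unit.
apply/posdefmx_unit/posdefmxD_psd => //; apply: psdmxZ.
  by apply: t_ge0; rewrite ltn0Sn.
by rewrite -[X in _ *m X]trmxK; exact/psdmx_conj/posdefmx_psd/posdefmx_inv.
Qed.

Lemma qclS k : (k < N)%N ->
  q k.+1 = q k + t k.+1 *: (P k.+1 *m B k.+1 *m invmx (Rm k.+1) *m a k.+1)
    - t k.+1 *: (P k *m B k.+1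
      *m invmx (Rm k.+1 + t k.+1 *: ((B k.+1)^T *m P k *m B k.+1))
      *m (B k.+1)^T *m q k).
Proof.
move=> kN; rewrite {1}/qcl big_nat_recr //= addrA mulmxDr -scalemxAr !mulmxA.
by rewrite {1}PclS // mulmxBl -scalemxAl addrAC.
Qed.
End ClosedFormRecursion.

Theorem mainTheorem1 (R : realType) (n m N : nat)
  (Qf : 'M[R]_n) (b : 'cV[R]_n) (t : nat -> R) (Rm : nat -> 'M[R]_m)
  (B : nat -> 'M[R]_(n, m)) (a : nat -> 'cV[R]_m)
  (P : R -> 'M[R]_n) (q : R -> 'cV[R]_n) :
  (0 < n)%N -> (0 < m)%N -> (0 < N)%N ->
  sym_posdef Qf ->
  (forall i, (1 <= i <= N)%N -> 0 < t i) ->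
  (forall i, (1 <= i <= N)%N -> sym_posdef (Rm i)) ->
  (* P, q: continuous, piecewise smooth solution of the Riccati system *)
  {within `[0, Tsum t N], continuous P} ->
  {within `[0, Tsum t N], continuous q} ->
  P 0 = Qf -> q 0 = b ->
  (forall i s, (1 <= i <= N)%N -> Tsum t i.-1 < s < Tsum t i ->
     is_derive s 1 P (- (P s *m B i *m invmx (Rm i) *m (B i)^T *m P s))) ->
  (forall i s, (1 <= i <= N)%N -> Tsum t i.-1 < s < Tsum t i ->
     is_derive s 1 q (- (P s *m B i *m invmx (Rm i) *m ((B i)^T *m q s - a i)))) ->
  (* known closed form of the solution at the times T_k *)
  (forall k, (k <= N)%N -> P (Tsum t k) = Pcl Qf t Rm B k) ->
  (forall k, (k <= N)%N -> q (Tsum t k) = qcl Qf b t Rm B a k) ->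
  forall i, (1 <= i <= N)%N ->
    let Pi := P (Tsum t i) in
    let Pp := P (Tsum t i.-1) in
    let qi := q (Tsum t i) in
    let qp := q (Tsum t i.-1) in
    let S := invmx (Rm i + t i *: ((B i)^T *m Pp *m B i)) in
    Pi = Pp - t i *: (Pp *m B i *m S *m (B i)^T *m Pp) /\
    qi = qp + t i *: (Pi *m B i *m invmx (Rm i) *m a i)
            - t i *: (Pp *m B i *m S *m (B i)^T *m qp).
Proof.
move=> _ _ _ [_ Qf_posdef] t_pos Rm_sym_posdef _ _ _ _ _ _ P_closed q_closed.
have t_ge0 j : (0 < j <= N)%N -> 0 <= t j by move/t_pos/ltW.
have Rm_posdef j : (0 < j <= N)%N -> posdefmx (Rm j) by case/Rm_sym_posdef.
case=> [//|k] /= kN.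
have kN' := ltnW kN; rewrite !P_closed ?q_closed //.
split; first exact: (PclS B Qf_posdef t_ge0 Rm_posdef kN).
exact: (qclS b B a Qf_posdef t_ge0 Rm_posdef kN).
Qed.
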